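(* For every $\Xi=(\xi_1,\dots,\xi_{n-1})\in\{0,1\}^{n-1}$, the set $B_\Xi$ is stable under all Kashiwara operators $\tilde e_i,\tilde f_i$ (i.e. if $b\in B_\Xi$ and $\tilde e_i b\neq 0$ then $\tilde e_i b\in B_\Xi$, and likewise for $\tilde f_i$) of the $\mathfrak{gl}_{2n}$-crystal $B^A(1)^{\otimes n}$ ($i=1,\dots,2n-1$), and also of the $\mathfrak{sp}_{2n}$-crystal $B^C(1)^{\otimes n}$ ($i=1,\dots,n$). Hence $B_\Xi$ is a union of connected components for both crystal structures.
   Context: Let $\mathcal{C}_n$ be the totally ordered alphabet $1<2<\cdots<n<\bar n<\overline{n-1}<\cdots<\bar1$. The crystal $B^A(1)$ of the vector representation of $U_q(\mathfrak{gl}_{2n})$ has vertex set $\mathcal{C}_n$ and arrows $1\xrightarrow{1}2\xrightarrow{2}\cdots\xrightarrow{n-1}n\xrightarrow{n}\bar n\xrightarrow{n+1}\overline{n-1}\xrightarrow{n+2}\cdots\xrightarrow{2n-1}\bar1$. The crystal $B^C(1)$ of the vector representation of $U_q(\mathfrak{sp}_{2n})$ has the same vertex set and arrows $k\xrightarrow{k}k+1$ and $\overline{k+1}\xrightarrow{k}\bar k$ for $1\le k\le n-1$, and $n\xrightarrow{n}\bar n$. Here $a\xrightarrow{i}b$ means $\tilde f_i a=b$, $\tilde e_i b=a$; $\varepsilon_i(b)$, $\varphi_i(b)$ are the number of times $\tilde e_i$, resp. $\tilde f_i$, can be applied to $b$. Tensor products use Kashiwara's convention: $\tilde f_i(b_1\otimes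 b_2)=\tilde f_ib_1\otimes b_2$ if $\varphi_i(b_1)>\varepsilon_i(b_2)$ and $b_1\otimes\tilde f_ib_2$ otherwise; $\tilde e_i(b_1\otimes b_2)=\tilde e_ib_1\otimes b_2$ if $\varphi_i(b_1)\ge\varepsilon_i(b_2)$ and $b_1\otimes\tilde e_ib_2$ otherwise; $n$-fold tensor powers are formed iteratively. Vertices of $B^A(1)^{\otimes n}$ and $B^C(1)^{\otimes n}$ are words $x_1\otimes\cdots\otimes x_n$ with $x_i\in\mathcal{C}_n$. For such a word define $\Xi(b)=(\xi_1,\dots,\xi_{n-1})$ with $\xi_i=0$ if $x_i<x_{i+1}$ and $\xi_i=1$ if $x_i\ge x_{i+1}$, and $B_\Xi=\{b:\Xi(b)=\Xi\}$. *)

From mathcomp Require Import all_boot.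

Set Implicit Arguments.
Unset Strict Implicit.
Unset Printing Implicit Defensive.

(* The alphabet C_n = 1 < 2 < ... < n < bar n < ... < bar 1 is encoded as    *)
(* 'I_(2n): index j < n stands for the letter j+1, index j >= n stands for   *)
(* bar(2n - j).  The total order of C_n is the natural order on indices.     *)
(* Kashiwara operators are partial functions L -> option L (None = 0).       *)
(* Operator indices i are natural numbers, as in the paper (1-based).        *)

Definition letter (n : nat) := 'I_(n.*2).

(* B^A(1): j --i--> j+1 iff j = i-1  (i.e. letter i --i--> next letter). *)
Definition fA (n : nat) (i : nat) (j : letter n) : option (letter n) :=
  if (0 < i) && (nat_of_ord j == i.-1) then insub j.+1 else None.
Definition eA (n : nat) (i : nat) (j : letter n) : option (letter n) :=
  if (0 < i) && (nat_of_ord j == i) then insub j.-1 else None.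

(* B^C(1): k --k--> k+1 and bar(k+1) --k--> bar k for 1 <= k <= n-1,
   n --n--> bar n.  In indices: for 1 <= i <= n,
   i-1 --i--> i  and  2n-i-1 --i--> 2n-i  (both coincide when i = n). *)
Definition fC (n : nat) (i : nat) (j : letter n) : option (letter n) :=
  if [&& 0 < i, i <= n & (nat_of_ord j == i.-1) || (nat_of_ord j == n.*2 - i.+1)]
  then insub j.+1 else None.
Definition eC (n : nat) (i : nat) (j : letter n) : option (letter n) :=
  if [&& 0 < i, i <= n & (nat_of_ord j == i) || (nat_of_ord j == n.*2 - i)]
  then insub j.-1 else None.

Fixpoint count_iter (T : Type) (g : T -> option T) (N : nat) (b : T) : nat :=
  match N with
  | 0 => 0
  | N'.+1 => match g b with
             | None => 0
             | Some b' => (count_iter g N' b').+1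
             end
  end.

Section Tensor.
Variables (L : Type) (f1 e1 : nat -> L -> option L) (fuelL : nat).
(* fuelL must bound the number of successive applications of f1 i (resp.
   e1 i) to a single letter; then fuelL * size r bounds it on words of
   size r, so count_iter computes exactly phi_i / eps_i. *)

(* Operators on iterated tensor powers ((x1 (x) x2) (x) x3) (x) ... (x) xk,
   represented by the REVERSED word r = [:: xk; ...; x1], so that
   x :: r' stands for b1 (x) b2 with b1 = (word of r') and b2 = x.
   Kashiwara's convention:
   f(b1(x)b2) = f b1 (x) b2 if phi(b1) > eps(b2), else b1 (x) f b2;
   e(b1(x)b2) = e b1 (x) b2 if phi(b1) >= eps(b2), else b1 (x) e b2. *)
Fixpoint tops (k : nat) :
  (nat -> seq L -> option (seq L)) * (nat -> seq L -> option (seq L)) :=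
  match k with
  | 0 => (fun _ _ => None, fun _ _ => None)
  | k'.+1 =>
    let fp := (tops k').1 in
    let ep := (tops k').2 in
    (fun i r => match r with
      | [::] => None
      | [:: x] => omap (fun y => [:: y]) (f1 i x)
      | x :: r' =>
        if count_iter (e1 i) fuelL x < count_iter (fp i) (fuelL * size r') r'
        then omap (fun r'' => x :: r'') (fp i r')
        else omap (fun y => y :: r') (f1 i x)
      end,
     fun i r => match r with
      | [::] => None
      | [:: x] => omap (fun y => [:: y]) (e1 i x)
      | x :: r' =>
        if count_iter (e1 i) fuelL x <= count_iter (fp i) (fuelL * size r') r'
        then omap (fun r'' => x :: r'') (ep i r')
        else omap (fun y => y :: r') (e1 i x)
      end)
  end.

(* Kashiwara operators on words b = [:: x1; ...; xk] (= x1 (x) ... (x) xk). *)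
Definition tens_f (i : nat) (b : seq L) : option (seq L) :=
  omap rev ((tops (size b)).1 i (rev b)).
Definition tens_e (i : nat) (b : seq L) : option (seq L) :=
  omap rev ((tops (size b)).2 i (rev b)).
End Tensor.

(* The crystals B^A(1)^{(x) n} and B^C(1)^{(x) n}.  Each f_i raises the index
   of one letter by 1 (each e_i lowers it), so n.*2 bounds phi_i, eps_i on a
   letter. *)
Definition fAn (n i : nat) := tens_f (@fA n) (@eA n) n.*2 i.
Definition eAn (n i : nat) := tens_e (@fA n) (@eA n) n.*2 i.
Definition fCn (n i : nat) := tens_f (@fC n) (@eC n) n.*2 i.
Definition eCn (n i : nat) := tens_e (@fC n) (@eC n) n.*2 i.

Definition Xi_of (n : nat) (b : seq (letter n)) : seq bool :=
  [seq (nat_of_ord p.2 <= nat_of_ord p.1) | p <- zip b (behead b)].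

Definition B_Xi (n : nat) (Xi : seq bool) (b : seq (letter n)) : bool :=
  (size b == n) && (Xi_of b == Xi).

From mathcomp Require Import all_boot zify.

Set Implicit Arguments.
Unset Strict Implicit.
Unset Printing Implicit Defensive.

(* In both crystals every i-string of B(1) has length at most one and f_i
   moves a letter one step up the order.  Read a word of the tensor power
   from the right: f_i (or e_i) acts either on the last letter or on the
   prefix.  A descent between the last two letters can only flip if the two
   letters become, or stop being, equal.  Comparing eps_i of the last letter
   with phi_i of the prefix, Kashiwara's tensor rule forbids exactly these
   situations: if f_i would make the last letter equal to its predecessor y,
   then f_i y is defined, so phi_i(prefix) > 0 = eps_i(last letter) and f_i
   acts on the prefix instead; the other three cases are symmetric. *)

Lemma count_iter_eq0 T (g : T -> option T) N b :
  g b = None -> count_iter g N b = 0.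
Proof. by case: N => //= N ->. Qed.

Lemma count_iter_gt0 T (g : T -> option T) N b :
  0 < N -> (0 < count_iter g N b) = g b.
Proof. by case: N => //= N _; case: (g b). Qed.

Lemma count_iter_le1 T (g : T -> option T) N b b' :
  g b = Some b' -> g b' = None -> count_iter g N b <= 1.
Proof. by case: N => //= N -> gb'; rewrite count_iter_eq0. Qed.

Record short_strings m (f e : 'I_m -> option 'I_m) : Prop := ShortStrings {
  short_f_succ x y : f x = Some y -> y = x.+1 :> nat;
  short_f_e x y : f x = Some y <-> e y = Some x;
  short_f_or_e x : f x = None \/ e x = None }.

Lemma insub_ordE m k (y : 'I_m) : (insub k == Some y) = (k == val y).
Proof.
case: insubP => [u _ <-|/negP Nk]; first by rewrite (inj_eq Some_inj) val_eqE.
by apply/esym/eqP => Ek; apply: Nk; rewrite Ek ltn_ord.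
Qed.

Lemma shift_short_strings m (P Q : pred nat) :
  (forall k, Q k.+1 = P k) -> ~~ Q 0 -> (forall k, ~~ (P k && Q k)) ->
  short_strings (fun x : 'I_m => if P x then insub x.+1 else None)
                (fun y : 'I_m => if Q y then insub y.-1 else None).
Proof.
move=> QS NQ0 NPQ; split.
- by move=> x y; case: ifP => // _ /eqP; rewrite insub_ordE => /eqP <-.
- move=> x y; split.
    case: ifP => // Px /eqP; rewrite insub_ordE => /eqP Ey.
    by rewrite -Ey QS Px /=; apply/eqP; rewrite insub_ordE.
  case: ifP => // Qy /eqP; rewrite insub_ordE => /eqP Ex.
  have Ey : val y = x.+1.
    by move: Qy Ex; case: y => -[|k] ? /=; [rewrite (negPf NQ0)|move=> _ ->].
  by rewrite -QS -Ey Qy; apply/eqP; rewrite insub_ordE Ey.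
- move=> x; have := NPQ x; case: (P x); case: (Q x) => //= _; by [left|right].
Qed.

Lemma short_stringsA n i : 0 < i -> short_strings (@fA n i) (@eA n i).
Proof.
move=> i_gt0; apply: (@shift_short_strings _
  (fun k => (0 < i) && (k == i.-1)) (fun k => (0 < i) && (k == i))).
- by move=> k; rewrite i_gt0 /=; apply/eqP/eqP; lia.
- by rewrite i_gt0 /=; lia.
- by move=> k; apply/negP => /andP [/andP [_ /eqP]] ? /andP [_ /eqP]; lia.
Qed.

Lemma short_stringsC n i : 0 < i -> i <= n -> short_strings (@fC n i) (@eC n i).
Proof.
move=> i_gt0 le_in; apply: (@shift_short_strings _
  (fun k => [&& 0 < i, i <= n & (k == i.-1) || (k == n.*2 - i.+1)])
  (fun k => [&& 0 < i, i <= n & (k == i) || (k == n.*2 - i)])).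
- by move=> k; rewrite i_gt0 le_in /=; apply/orP/orP => -[/eqP ?|/eqP ?];
    [left|right|left|right]; apply/eqP; lia.
- by rewrite i_gt0 le_in /=; apply/negP => /orP [] /eqP; lia.
- move=> k; rewrite i_gt0 le_in /=.
  by apply/negP => /andP [/orP [] /eqP ? /orP [] /eqP ?]; lia.
Qed.

Lemma leq_ord_succr m (x y y' : 'I_m) :
  y' = y.+1 :> nat -> x != y' -> (x <= y') = (x <= y).
Proof.
move=> Ey' Nxy; have /negPf : (x : nat) != y' := Nxy.
by rewrite Ey' leq_eqVlt => ->.
Qed.

Lemma leq_ord_succl m (x x' y : 'I_m) :
  x' = x.+1 :> nat -> x != y -> (x' <= y) = (x <= y).
Proof.
move=> Ex' Nxy; have : (x : nat) != y := Nxy.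
by rewrite Ex' ltn_neqAle => ->.
Qed.

Lemma Xi_of_rcons2 n (s : seq (letter n)) y x :
  Xi_of (rcons (rcons s y) x) = rcons (Xi_of (rcons s y)) (x <= y).
Proof.
elim: s => [|a s IHs] //; case: s IHs => [|b s] IHs //.
by rewrite !rcons_cons [LHS]/Xi_of /= -/(Xi_of _) -!rcons_cons IHs.
Qed.

Lemma Xi_of_rev_cons2 n (x y : letter n) r :
  Xi_of (rev (x :: y :: r)) = rcons (Xi_of (rev (y :: r))) (x <= y).
Proof. by rewrite !rev_cons Xi_of_rcons2. Qed.

Section TensorPower.
Variables (n : nat) (f1 e1 : nat -> letter n -> option (letter n)).
Variables (fuel i : nat).
Hypothesis fuel_gt0 : 0 < fuel.
Hypothesis strings : short_strings (f1 i) (e1 i).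

Local Notation fr r := ((tops f1 e1 fuel (size r)).1 i r%SEQ).
Local Notation er r := ((tops f1 e1 fuel (size r)).2 i r%SEQ).
Local Notation phi r :=
  (count_iter ((tops f1 e1 fuel (size r)).1 i) (fuel * size r) r%SEQ).
Local Notation eps x := (count_iter (e1 i) fuel x).

Let f_succ := short_f_succ strings.
Let f_e := short_f_e strings.

Let f_None x y : e1 i x = Some y -> f1 i x = None.
Proof. by case: (short_f_or_e strings x) => ->. Qed.

Let e_None x y : f1 i x = Some y -> e1 i x = None.
Proof. by case: (short_f_or_e strings x) => ->. Qed.

Lemma eps_letter x : eps x = e1 i x.
Proof.
case Ex: (e1 i x) => [z|]; last exact: count_iter_eq0.
by apply/eqP; rewrite eqn_leq (count_iter_le1 _ Ex (e_None ((f_e _ _).2 Ex)))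
  count_iter_gt0 ?Ex.
Qed.

Lemma phi_cons_gt0 y r : (0 < phi (y :: r)) = fr (y :: r).
Proof. by rewrite count_iter_gt0 // muln_gt0 fuel_gt0. Qed.

Lemma fr_single y : fr [:: y] = omap (fun y' => [:: y']) (f1 i y).
Proof. by []. Qed.

Lemma er_single y : er [:: y] = omap (fun y' => [:: y']) (e1 i y).
Proof. by []. Qed.

Lemma fr_cons2 x y r : fr (x :: y :: r) =
  if eps x < phi (y :: r) then omap (cons x) (fr (y :: r))
  else omap (fun x' => x' :: y :: r) (f1 i x).
Proof. by []. Qed.

Lemma er_cons2 x y r : er (x :: y :: r) =
  if eps x <= phi (y :: r) then omap (cons x) (er (y :: r))
  else omap (fun x' => x' :: y :: r) (e1 i x).
Proof. by []. Qed.

Lemma fr_cons_defined y r : f1 i y -> fr (y :: r).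
Proof.
case: r => [|z r] fy; first by rewrite fr_single; case: (f1 i y) fy.
rewrite fr_cons2; case: ifP => [/(leq_ltn_trans (leq0n _))|_].
  by rewrite phi_cons_gt0; case: (fr (z :: r)).
by case: (f1 i y) fy.
Qed.

Lemma fr_cons_None y r :
  phi r <= eps y -> f1 i y = None -> fr (y :: r) = None.
Proof.
case: r => [|z r] le_phi fy; first by rewrite fr_single fy.
by rewrite fr_cons2 ltnNge le_phi fy.
Qed.

Lemma fr_consP y r r3 : fr (y :: r) = Some r3 ->
  (eps y < phi r /\ exists2 r', fr r = Some r' & r3 = y :: r') \/
  (phi r = 0 /\ exists2 y', f1 i y = Some y' & r3 = y' :: r).
Proof.
case: r => [|z r].
  rewrite fr_single; case Ey: (f1 i y) => [y'|] //= [<-].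
  by right; split; [rewrite muln0 | exists y'].
rewrite fr_cons2; case: ifP => lt_eps.
  by case Er: (fr _) => [r'|] //= [<-]; left; split=> //; exists r'.
case Ey: (f1 i y) => [y'|] //= [<-]; right; split; last by exists y'.
by move: lt_eps; rewrite eps_letter (e_None Ey); case: (phi _).
Qed.

Lemma er_consP y r r3 : er (y :: r) = Some r3 ->
  (eps y <= phi r /\ exists2 r', er r = Some r' & r3 = y :: r') \/
  (phi r < eps y /\ exists2 y', e1 i y = Some y' & r3 = y' :: r).
Proof.
case: r => [|z r].
  rewrite er_single; case Ey: (e1 i y) => [y'|] //= [<-].
  by right; split; [rewrite muln0 eps_letter Ey | exists y'].
rewrite er_cons2; case: ifP => le_eps.
  by case Er: (er _) => [r'|] //= [<-]; left; split=> //; exists r'.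
case Ey: (e1 i y) => [y'|] //= [<-]; right; split; last by exists y'.
by rewrite ltnNge le_eps.
Qed.

Lemma fr_size r r3 : fr r = Some r3 -> size r3 = size r.
Proof.
elim: r r3 => [|y r IHr] r3 //= /fr_consP [[_ [r' /IHr <- ->]]|[_ [y' _ ->]]] //.
Qed.

Lemma er_size r r3 : er r = Some r3 -> size r3 = size r.
Proof.
elim: r r3 => [|y r IHr] r3 //= /er_consP [[_ [r' /IHr <- ->]]|[_ [y' _ ->]]] //.
Qed.

(* The second conjunct strengthens the induction: when f_i changes the last
   letter, phi_i drops to zero, which bounds phi_i of a prefix by one. *)
Lemma fr_Xi y r y' r' : fr (y :: r) = Some (y' :: r') ->
  Xi_of (rev (y' :: r')) = Xi_of (rev (y :: r)) /\
  (y' = y \/ f1 i y = Some y' /\ fr (y' :: r') = None).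
Proof.
elim: r y y' r' => [|z r IHr] y y' r' /fr_consP.
  case=> [[_ [? /= //]]|[_ [y'' Ey [-> ->]]]].
  split; first by rewrite /rev.
  by right; rewrite fr_single (f_None ((f_e _ _).1 Ey)).
case=> [[lt_eps [r'' Er [-> ->]]]|[phi0 [y'' Ey [-> ->]]]].
  have := fr_size Er; case: r'' Er => [//|z' r''] Er Es.
  have [IHXi IHz] := IHr _ _ _ Er.
  split; last by left.
  rewrite !Xi_of_rev_cons2 IHXi; congr rcons.
  case: IHz => [-> //|[Ez]]; rewrite Es => Nfr.
  have /f_succ Ez' := Ez.
  have ne_yz' : y != z'.
    apply: contraTneq lt_eps => ->.
    by rewrite eps_letter ((f_e _ _).1 Ez) -leqNgt (count_iter_le1 _ Er Nfr).
  exact: leq_ord_succr.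
split; last by right; split=> //; apply: fr_cons_None;
  [rewrite phi0|exact: f_None ((f_e _ _).1 Ey)].
rewrite !Xi_of_rev_cons2; congr rcons.
have ne_yz : y != z.
  apply/eqP => Eyz; suff : 0 < phi (z :: r) by rewrite phi0.
  by rewrite phi_cons_gt0 fr_cons_defined // -Eyz Ey.
exact: leq_ord_succl (f_succ Ey) ne_yz.
Qed.

Lemma er_Xi y r y' r' : er (y :: r) = Some (y' :: r') ->
  Xi_of (rev (y' :: r')) = Xi_of (rev (y :: r)) /\
  (y' = y \/ e1 i y = Some y' /\ fr (y :: r) = None).
Proof.
elim: r y y' r' => [|z r IHr] y y' r' /er_consP.
  case=> [[_ [? /= //]]|[_ [y'' Ey [-> ->]]]].
  split; first by rewrite /rev.
  by right; rewrite fr_single (f_None Ey).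
case=> [[le_eps [r'' Er [-> ->]]]|[lt_phi [y'' Ey [-> ->]]]].
  have := er_size Er; case: r'' Er => [//|z' r''] Er _.
  have [IHXi IHz] := IHr _ _ _ Er.
  split; last by left.
  rewrite !Xi_of_rev_cons2 IHXi; congr rcons.
  case: IHz => [-> //|[Ez Nfr]].
  have /f_succ Ez' := (f_e _ _).2 Ez.
  have ne_yz : y != z.
    apply: contraTneq le_eps => ->.
    by rewrite eps_letter Ez (count_iter_eq0 _ Nfr).
  exact/esym/leq_ord_succr.
split; last by right; split=> //; apply: fr_cons_None;
  [exact: ltnW|exact: f_None Ey].
rewrite !Xi_of_rev_cons2; congr rcons.
have /f_succ Ey' := (f_e _ _).2 Ey.
have ne_y'z : y'' != z.
  apply: contraTneq lt_phi => <-.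
  rewrite -leqNgt eps_letter Ey.
  by rewrite phi_cons_gt0 fr_cons_defined // ((f_e _ _).2 Ey).
exact/esym/leq_ord_succl.
Qed.

Lemma tens_f_B_Xi Xi b b' :
  B_Xi Xi b -> tens_f f1 e1 fuel i b = Some b' -> B_Xi Xi b'.
Proof.
have <- := revK b; move: (rev b) => r.
rewrite /B_Xi /tens_f revK !size_rev; case: r => [|y r] //.
case Er: (fr _) => [r3|] //= Bb [<-]; rewrite size_rev (fr_size Er).
by case: r3 Er => [/fr_size|y' r' /fr_Xi [->]].
Qed.

Lemma tens_e_B_Xi Xi b b' :
  B_Xi Xi b -> tens_e f1 e1 fuel i b = Some b' -> B_Xi Xi b'.
Proof.
have <- := revK b; move: (rev b) => r.
rewrite /B_Xi /tens_e revK !size_rev; case: r => [|y r] //.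
case Er: (er _) => [r3|] //= Bb [<-]; rewrite size_rev (er_size Er).
by case: r3 Er => [/er_size|y' r' /er_Xi [->]].
Qed.

End TensorPower.

Lemma B_Xi_stable n (f e : nat -> letter n -> option (letter n)) i Xi b b' :
  short_strings (f i) (e i) -> B_Xi Xi b ->
  (tens_f f e n.*2 i b = Some b' -> B_Xi Xi b') /\
  (tens_e f e n.*2 i b = Some b' -> B_Xi Xi b').
Proof.
case: b => [|x b] strings Bb; first by [].
have n2_gt0 : 0 < n.*2 by apply: leq_ltn_trans (ltn_ord x).
by split; [apply: tens_f_B_Xi | apply: tens_e_B_Xi].
Qed.

Theorem mainTheorem8 (n : nat) (Xi : seq bool) :
  size Xi = n.-1 ->
  (forall i : nat, 1 <= i <= (n.*2).-1 ->
     forall b b' : seq (letter n), @B_Xi n Xi b ->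
       (@fAn n i b = Some b' -> @B_Xi n Xi b') /\
       (@eAn n i b = Some b' -> @B_Xi n Xi b')) /\
  (forall i : nat, 1 <= i <= n ->
     forall b b' : seq (letter n), @B_Xi n Xi b ->
       (@fCn n i b = Some b' -> @B_Xi n Xi b') /\
       (@eCn n i b = Some b' -> @B_Xi n Xi b')).
Proof.
move=> _; split=> i /andP [i_gt0 i_le] b b'.
- exact/B_Xi_stable/short_stringsA.
- exact/B_Xi_stable/short_stringsC.
Qed.
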